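(* Let $1<p<\infty$, $p'=p/(p-1)$, $C\ge1$, and let $X$ be a Banach lattice with a normalized $1$-unconditional basis $(e_i)$ (coordinatewise order), biorthogonal functionals $(e_i^* )$, such that $X$ $C$-lattice embeds into $(\bigoplus_{\mu\in\Gamma}L^{p,\infty}(\mu))_\infty$ for some set $\Gamma$ of measures. Then for every $b=\sum_{i=1}^nb_ie_i^*\in X^*_+$ with $\|b\|=1$ and all subsets $I_1,\dots,I_m\subseteq\{1,\dots,n\}$ such that $\sum_{j=1}^m\chi_{I_j}=l\,\chi_{\{1,\dots,n\}}$ for some $l\in\mathbb N$, we have $$\sum_{j=1}^m\Big\|\sum_{i\in I_j}b_ie_i^*\Big\|^{p'}\le C^{p'}l.$$
   Context: $L^{p,\infty}(\mu)$ is weak-$L^p$ with the norm $\|h\|=\sup\{\mu(A)^{\frac1p-1}\int_A|h|\,d\mu:0<\mu(A)<\infty\}$. A $C$-lattice embedding of $X$ into $Y$ is an injective lattice homomorphism $T$ with $C^{-1}\|x\|\le\|Tx\|\le\|x\|$ for all $x$. *)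

From HB Require Import structures.
From mathcomp Require Import all_boot all_order all_algebra.
From mathcomp Require Import all_classical all_reals all_analysis.
Set Implicit Arguments. Unset Strict Implicit. Unset Printing Implicit Defensive.
Import Order.TTheory GRing.Theory Num.Theory.
Import numFieldNormedType.Exports.
Local Open Scope classical_set_scope.
Local Open Scope ring_scope.

Section Defs.
Variable R : realType.

(* X is realised (via x |-> (e_i^*(x))_i) as a set of real sequences, with the
   basis vector e_i the i-th unit sequence, coordinatewise order and norm nrm. *)

Definition unit_seq (i : nat) : nat -> R := fun k => if k == i then 1 else 0.

Definition seq_lin (a : R) (x y : nat -> R) : nat -> R := fun i => a * x i + y i.
Definition seq_sub (x y : nat -> R) : nat -> R := fun i => x i - y i.
Definition seq_abs (x : nat -> R) : nat -> R := fun i => `|x i|.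
Definition seq_max (x y : nat -> R) : nat -> R := fun i => Num.max (x i) (y i).
Definition seq_tail (k : nat) (x : nat -> R) : nat -> R :=
  fun i => if (i < k)%N then 0 else x i.

Definition banach_lattice_with_basis (X : set (nat -> R)) (nrm : (nat -> R) -> R) : Prop :=
  [/\
      X (fun _ => 0) /\ (forall a x y, X x -> X y -> X (seq_lin a x y)),
      [/\ forall x, X x -> 0 <= nrm x,
          forall x, X x -> nrm x = 0 -> x = (fun _ => 0),
          forall a x, X x -> nrm (fun i => a * x i) = `|a| * nrm x &
          forall x y, X x -> X y -> nrm (seq_lin 1 x y) <= nrm x + nrm y],
      (forall u : nat -> nat -> R, (forall n, X (u n)) ->
         (forall e : R, 0 < e -> exists N, forall m n, (N <= m)%N -> (N <= n)%N ->
             nrm (seq_sub (u m) (u n)) < e) ->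
         exists2 x, X x & (fun n => nrm (seq_sub (u n) x)) @ \oo --> (0 : R)),
      (forall x, X x -> X (seq_abs x)) /\
      (forall x y, X x -> X y -> (forall i, `|x i| <= `|y i|) -> nrm x <= nrm y) &
      (* normalized Schauder basis (e_i): x = sum_i x_i e_i in norm *)
      [/\ forall i, X (unit_seq i),
          forall i, nrm (unit_seq i) = 1 &
          forall x, X x -> (fun k => nrm (seq_tail k x)) @ \oo --> (0 : R)]].

Definition dual_norm (X : set (nat -> R)) (nrm : (nat -> R) -> R)
  (f : (nat -> R) -> R) : R :=
  sup [set `|f x| | x in [set x | X x /\ nrm x <= 1]].

Definition weak_norm d (T : measurableType d) (mu : {measure set T -> \bar R})
  (p : R) (h : T -> R) : \bar R :=
  ereal_sup ([set 0%E] `|`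
    [set (((fine (mu A)) `^ (p^-1 - 1))%:E * \int[mu]_(t in A) (`|h t|)%:E)%E
       | A in [set A | measurable A /\ (0 < mu A < +oo)%E]]).

Definition linf_sum_norm (Gamma : Type) (d : Gamma -> measure_display)
  (T : forall g, measurableType (d g)) (mu : forall g, {measure set T g -> \bar R})
  (p : R) (h : forall g, T g -> R) : \bar R :=
  ereal_sup ([set 0%E] `|` [set weak_norm (mu g) p (h g) | g in [set: Gamma]]).

Definition in_linf_sum (Gamma : Type) (d : Gamma -> measure_display)
  (T : forall g, measurableType (d g)) (mu : forall g, {measure set T g -> \bar R})
  (p : R) (h : forall g, T g -> R) : Prop :=
  (forall g, measurable_fun [set: T g] (h g)) /\ (linf_sum_norm mu p h < +oo)%E.

(* Tm is a C-lattice embedding of X into (bigoplus L^{p,oo}(mu_g))_oo;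
   elements of the target are identified up to mu_g-a.e. equality in each component. *)
Definition C_lattice_embedding (X : set (nat -> R)) (nrm : (nat -> R) -> R)
  (Gamma : Type) (d : Gamma -> measure_display)
  (T : forall g, measurableType (d g)) (mu : forall g, {measure set T g -> \bar R})
  (p C : R) (Tm : (nat -> R) -> forall g, T g -> R) : Prop :=
  [/\ forall x, X x -> in_linf_sum mu p (Tm x),
      forall a x y, X x -> X y -> forall g,
        {ae mu g, forall t, Tm (seq_lin a x y) g t = a * Tm x g t + Tm y g t},
      forall x y, X x -> X y -> forall g,
        {ae mu g, forall t, Tm (seq_max x y) g t = Num.max (Tm x g t) (Tm y g t)},
      forall x y, X x -> X y -> (forall g, {ae mu g, forall t, Tm x g t = Tm y g t}) -> x = y &
      forall x, X x -> ((C^-1 * nrm x)%:E <= linf_sum_norm mu p (Tm x) /\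
                        linf_sum_norm mu p (Tm x) <= (nrm x)%:E)%E].

End Defs.

From HB Require Import structures.
From mathcomp Require Import all_boot all_order all_algebra.
From mathcomp Require Import all_classical all_reals all_analysis.
From mathcomp Require Import ring lra measurable_realfun.
Import Order.TTheory GRing.Theory Num.Theory.
Import numFieldNormedType.Exports.
Local Open Scope classical_set_scope.
Local Open Scope ring_scope.
Set Implicit Arguments. Unset Strict Implicit.

(* Fix weights w_j >= 0 and pick x_j of norm <= 1 almost norming the restriction of b
   to I_j; put y = sum_j w_j y_j with y_j = sum_(i in I_j) |x_j(i)| e_i.  Up to an
   epsilon, sum_j w_j ||b|I_j|| <= b(y) <= ||y|| <= C ||Ty||.  As T is a lattice
   homomorphism the T e_i are disjoint, so at each point at most l of the T y_j are
   nonzero: on a set A of finite measure the supports of the T y_j have total measure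
   at most l mu(A).  Estimating each integral over A by the weak-L^p norm of T y_j
   and applying Young's inequality termwise gives ||Ty|| <= sum_j w_j^p / p + l / p'.
   Choosing w_j proportional to ||b|I_j||^(p'-1) turns this into the claim. *)

Definition seq_comb (R : realType) (I : Type) (c : I -> R) (v : I -> nat -> R)
    (s : seq I) : nat -> R :=
  foldr (fun i acc => seq_lin (c i) (v i) acc) (fun _ => 0) s.

Lemma seq_combE (R : realType) I (c : I -> R) v s k :
  seq_comb c v s k = \sum_(i <- s) c i * v i k.
Proof. by elim: s => [|i s IH] /=; rewrite ?big_nil // big_cons /seq_lin IH. Qed.

Definition abs_restrict (R : realType) n (J : {set 'I_n}) (x : nat -> R) : nat -> R :=
  seq_comb (fun i : 'I_n => `|x i|) (fun i : 'I_n => unit_seq R i) (enum J).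

Section AbsRestrict.
Variables (R : realType) (n : nat) (J : {set 'I_n}) (x : nat -> R).

Lemma abs_restrictE k : abs_restrict J x k = \sum_(i in J) `|x i| * unit_seq R i k.
Proof. by rewrite /abs_restrict seq_combE big_enum. Qed.

Lemma normr_abs_restrict_le k : `|abs_restrict J x k| <= `|x k|.
Proof.
have unit_ge0 i : 0 <= unit_seq R i k by rewrite /unit_seq; case: eqP.
rewrite abs_restrictE ger0_norm ?sumr_ge0 // => [|i _]; last exact: mulr_ge0.
apply: (@le_trans _ _ (\sum_(i < n) `|x i| * unit_seq R i k)).
  by rewrite [leRHS](bigID (mem J)) lerDl sumr_ge0 // => i _; exact: mulr_ge0.
case: (ltnP k n) => [kn|nk].
  rewrite (bigD1 (Ordinal kn)) //= big1 ?addr0 => [|i /negPf ik].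
    by rewrite /unit_seq eqxx mulr1.
  by rewrite /unit_seq; case: eqP => [ki|_]; [rewrite -val_eqE /= ki eqxx in ik | rewrite mulr0].
rewrite big1 // => i _; rewrite /unit_seq; case: eqP => [ki|_]; last by rewrite mulr0.
by have := ltn_ord i; rewrite -ki ltnNge nk.
Qed.

Lemma sum_mul_abs_restrict (b : 'I_n -> R) :
  \sum_(i < n) b i * abs_restrict J x i = \sum_(i in J) b i * `|x i|.
Proof.
under eq_bigr do rewrite abs_restrictE mulr_sumr.
rewrite exchange_big /=; apply: eq_bigr => i _.
rewrite (bigD1 i) //= big1 ?addr0 => [|i' i'i].
  by rewrite /unit_seq eqxx mulr1 mulrC.
by rewrite /unit_seq; case: eqP => [/val_inj ii'|_]; [rewrite ii' eqxx in i'i | rewrite !mulr0].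
Qed.

End AbsRestrict.

Section BanachLatticeWithBasis.
Variables (R : realType) (X : set (nat -> R)) (nrm : (nat -> R) -> R).
Hypothesis hX : banach_lattice_with_basis X nrm.

Lemma X_seq_comb I (c : I -> R) v s : (forall i, X (v i)) -> X (seq_comb c v s).
Proof. by case: hX => [[X0 Xlin] _ _ _ _] Xv; elim: s => [|i s IH] //=; exact: Xlin. Qed.

Lemma X_abs_restrict n (J : {set 'I_n}) x : X (abs_restrict J x).
Proof. by apply: X_seq_comb => i; case: hX => _ _ _ _ []. Qed.

Lemma X_scale a x : X x -> X (fun i => a * x i).
Proof.
case: hX => [[X0 Xlin] _ _ _ _] Xx.
by have := Xlin a _ _ Xx X0; congr X; apply/funext => i; rewrite /seq_lin addr0.
Qed.

Lemma nrm_zero : nrm (fun _ => 0) = 0.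
Proof.
case: hX => [[X0 _] [_ _ Nsc _] _ _ _].
have E : nrm (fun i => 0 * (fun _ => 0 : R) i) = 0 by rewrite Nsc // normr0 mul0r.
by rewrite -[RHS]E; congr nrm; apply/funext => i; rewrite mul0r.
Qed.

Lemma normr_coord_le_nrm x k : X x -> `|x k| <= nrm x.
Proof.
case: hX => [_ [_ _ Nsc _] _ [_ Nmon] [Xu Nu _]] Xx.
have := Nmon _ _ (X_scale (x k) (Xu k)) Xx.
rewrite Nsc // Nu mulr1; apply => i; rewrite /unit_seq.
by case: eqP => [->|_]; rewrite ?mulr1 // mulr0 normr0.
Qed.

Section FiniteFunctional.
Variables (n : nat) (P : pred 'I_n) (b : 'I_n -> R).
Local Notation f := (fun x => \sum_(i < n | P i) b i * x i).

Lemma has_sup_dual_ball : has_sup [set `|f x| | x in [set x | X x /\ nrm x <= 1]].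
Proof.
case: hX => [[X0 _] _ _ _ _]; split.
  by exists `|f (fun _ => 0)|, (fun _ => 0); split; rewrite ?nrm_zero.
exists (\sum_(i < n | P i) `|b i|) => _ [x [Xx Nx] <-].
apply: le_trans (ler_norm_sum _ _ _) _; apply: ler_sum => i _.
rewrite normrM -[leRHS]mulr1 ler_wpM2l //.
exact: le_trans (normr_coord_le_nrm _ Xx) Nx.
Qed.

Lemma dual_norm_ge0 : 0 <= dual_norm X nrm f.
Proof.
case: hX => [[X0 _] _ _ _ _].
have N0 : nrm (fun _ => 0) <= 1 by rewrite nrm_zero.
exact: le_trans (sup_upper_bound has_sup_dual_ball (ex_intro2 _ _ _ (conj X0 N0) erefl)).
Qed.

Lemma normr_le_dual_norm x : X x -> `|f x| <= dual_norm X nrm f * nrm x.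
Proof.
case: hX => [[X0 Xlin] [Nge0 N0 Nsc _] _ _ _] Xx.
have [nx0|nx0] := eqVneq (nrm x) 0.
  by rewrite (N0 _ Xx nx0) nrm_zero mulr0 big1 ?normr0 // => i _; rewrite mulr0.
have nx_gt0 : 0 < nrm x by rewrite lt_neqAle eq_sym nx0 Nge0.
pose u i := (nrm x)^-1 * x i.
have Nu : nrm u <= 1 by rewrite Nsc // ger0_norm ?invr_ge0 ?Nge0 // mulVf.
have := sup_upper_bound has_sup_dual_ball (ex_intro2 _ _ _ (conj (X_scale _ Xx) Nu) erefl).
have -> : f u = (nrm x)^-1 * f x by rewrite mulr_sumr; apply: eq_bigr => i _; rewrite mulrCA.
by rewrite normrM ger0_norm ?invr_ge0 ?Nge0 // ler_pdivrMl // mulrC.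
Qed.

Lemma dual_norm_approx e : 0 < e ->
  exists x, [/\ X x, nrm x <= 1 & dual_norm X nrm f - e < `|f x|].
Proof.
by move=> e0; have [_ [x [Xx Nx] <-] H] := sup_adherent e0 has_sup_dual_ball; exists x.
Qed.

Lemma coef_ge0_of_positive : (forall x, X x -> (forall i, 0 <= x i) -> 0 <= f x) ->
  forall i, P i -> 0 <= b i.
Proof.
case: hX => _ _ _ _ [Xu _ _] fpos i Pi.
have unit_ge0 k : 0 <= unit_seq R i k by rewrite /unit_seq; case: eqP.
have := fpos _ (Xu i) unit_ge0.
rewrite (bigD1 i) //= big1 ?addr0 => [|i' /andP [_ i'i]]; first by rewrite /unit_seq eqxx mulr1.
by rewrite /unit_seq; case: eqP => [/val_inj ii'|_]; [rewrite ii' eqxx in i'i | rewrite mulr0].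
Qed.

End FiniteFunctional.

End BanachLatticeWithBasis.

Definition young_bound (R : realType) (p : R) m (w : 'I_m -> R) (L : R) : R :=
  \sum_j w j `^ p / p + L / (p / (p - 1)).

Lemma conj_exponent_inv (R : realType) (p : R) : 1 < p -> (p / (p - 1))^-1 = 1 - p^-1.
Proof. by move=> hp; rewrite invf_div; field; rewrite gt_eqF // (lt_trans ltr01). Qed.

Lemma young_bound_ge0 (R : realType) (p L : R) m (w : 'I_m -> R) :
  1 < p -> (forall j, 0 <= w j) -> 0 <= L -> 0 <= young_bound p w L.
Proof.
move=> hp w0 L0; have p0 : 0 < p by rewrite (lt_trans ltr01).
rewrite addr_ge0 ?sumr_ge0 // => [j _|]; first by rewrite divr_ge0 ?powR_ge0 ?ltW.
by rewrite divr_ge0 // ltW // divr_gt0 // subr_gt0.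
Qed.

Lemma young_sum (R : realType) (p a L : R) m (w u : 'I_m -> R) :
  1 < p -> 0 < a -> (forall j, 0 <= w j) -> (forall j, 0 <= u j) -> \sum_j u j <= L * a ->
  a `^ (p^-1 - 1) * \sum_j w j * u j `^ (1 - p^-1) <= young_bound p w L.
Proof.
move=> hp a0 w0 u0 hu.
have p0 : 0 < p by rewrite (lt_trans ltr01).
rewrite /young_bound; set q := p / (p - 1).
have q0 : 0 < q by rewrite divr_gt0 // subr_gt0.
have qi : q^-1 = 1 - p^-1 by rewrite conj_exponent_inv.
have pq : p^-1 + q^-1 = 1 by rewrite qi addrC subrK.
rewrite mulr_sumr.
apply: (@le_trans _ _ (\sum_j (w j `^ p / p + (u j / a) / q))).
  apply: ler_sum => j _.
  have -> : a `^ (p^-1 - 1) * (w j * u j `^ (1 - p^-1)) = w j * (u j / a) `^ q^-1.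
    rewrite qi powRM ?invr_ge0 ?(ltW a0) ?u0 // -(powR_inv1 (ltW a0)) -powRrM.
    by rewrite mulN1r opprB mulrCA [X in _ * X = _]mulrC.
  apply: le_trans (conjugate_powR (w0 j) (powR_ge0 (u j / a) q^-1) p0 q0 pq) _.
  by rewrite -powRrM mulVf ?gt_eqF // powRr1 // divr_ge0 // ltW.
rewrite big_split /= lerD2l -!mulr_suml.
by rewrite ler_pM2r ?invr_gt0 // ler_pdivrMr.
Qed.

Section WeakLpBounds.
Variables (R : realType) (d : measure_display) (T : measurableType d).
Variables (mu : {measure set T -> \bar R}) (p : R).
Hypothesis hp : 1 < p.

Lemma measurable_nonzero (h : T -> R) : measurable_fun setT h -> measurable [set t | h t != 0].
Proof.
move=> mh; have := mh measurableT _ (measurableC (measurable_set1 (0 : R))).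
by rewrite setTI; congr measurable; apply/seteqP; split => t /= /eqP.
Qed.

Lemma sum_measure_setI_le m (l : nat) (U : 'I_m -> T -> bool) A :
  (forall j, measurable [set t | U j t]) -> measurable A ->
  {ae mu, forall t, \sum_j (U j t : nat)%:R <= l%:R :> R} ->
  (\sum_j mu (A `&` [set t | U j t]) <= l%:R%:E * mu A)%E.
Proof.
move=> mU mA hc.
have -> : (\sum_j mu (A `&` [set t | U j t])
          = \sum_j \int[mu]_(t in A) (\1_[set t | U j t] t)%:E)%E.
  by apply: eq_bigr => j _; rewrite integral_indic // setIC.
have mind j : measurable_fun A (fun t => (\1_[set t | U j t] t : R)%:E).
  by apply/measurable_EFinP; exact: measurable_indic.
rewrite -ge0_integral_sum // -integral_cst //.
apply: ae_ge0_le_integral => //.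
- by move=> t _; rewrite sume_ge0 // => j _; rewrite lee_fin.
- exact: emeasurable_sum.
- by move=> t _; rewrite lee_fin.
- apply: filterS hc => t H _; rewrite sumEFin lee_fin; apply: le_trans H.
  rewrite le_eqVlt; apply/orP; left; apply/eqP/eq_bigr => j _.
  by rewrite indicE; congr (_%:R); congr (nat_of_bool _); apply/idP/idP; rewrite in_setE.
Qed.

Lemma integral_abs_le_support (h : T -> R) A :
  measurable_fun setT h -> (weak_norm mu p h <= 1)%E -> measurable A -> (mu A < +oo)%E ->
  (\int[mu]_(t in A) (`|h t|)%:E
     <= ((fine (mu (A `&` [set t | h t != 0]))) `^ (1 - p^-1))%:E)%E.
Proof.
move=> mh hb mA Afin; set B := A `&` _.
have mB : measurable B by exact/measurableI/measurable_nonzero.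
have Bfin : (mu B < +oo)%E.
  by apply: le_lt_trans Afin; apply: le_measure; rewrite ?inE //; exact: subIsetl.
have mabs : measurable_fun B (fun t => (`|h t|)%:E).
  by apply/measurable_EFinP; apply: measurable_funS (measurableT_comp _ mh).
have -> : (\int[mu]_(t in A) (`|h t|)%:E = \int[mu]_(t in B) (`|h t|)%:E)%E.
  rewrite integral_mkcondr; apply: eq_integral => t _; rewrite patchE.
  by case: ifPn => // /negP htU; congr (_%:E); apply/eqP; rewrite normr_eq0;
    apply/negP => /negP ht; apply: htU; rewrite in_setE.
have [B0|Bneq0] := eqVneq (mu B) 0%E.
  by rewrite null_set_integral // lee_fin powR_ge0.
have Bpos : (0 < mu B)%E by rewrite lt0e Bneq0 measure_ge0.
have mB_gt0 : 0 < fine (mu B) by rewrite fine_gt0 // Bpos Bfin.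
have hB : ((fine (mu B) `^ (p^-1 - 1))%:E * \int[mu]_(t in B) (`|h t|)%:E <= 1)%E.
  by apply: le_trans hb; apply: ereal_sup_ubound; right; exists B => //; split => //; exact/andP.
have powR_cancel : fine (mu B) `^ (1 - p^-1) * fine (mu B) `^ (p^-1 - 1) = 1.
  rewrite -powRD; last by rewrite (gt_eqF mB_gt0) implybT.
  by rewrite (_ : 1 - p^-1 + (p^-1 - 1) = 0) ?powRr0 //; ring.
have := lee_wpmul2l (_ : (0 <= (fine (mu B) `^ (1 - p^-1))%:E)%E) hB.
by rewrite mule1 muleA -EFinM powR_cancel mul1e; apply; rewrite lee_fin powR_ge0.
Qed.

Lemma integral_abs_sum_le m (f : T -> R) (fj : 'I_m -> T -> R) (w : 'I_m -> R) A :
  measurable_fun setT f -> (forall j, measurable_fun setT (fj j)) -> (forall j, 0 <= w j) ->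
  {ae mu, forall t, f t = \sum_j w j * fj j t} ->
  (forall j, weak_norm mu p (fj j) <= 1)%E -> measurable A -> (mu A < +oo)%E ->
  (\int[mu]_(t in A) (`|f t|)%:E
     <= (\sum_j w j * fine (mu (A `&` [set t | fj j t != 0])) `^ (1 - p^-1))%:E)%E.
Proof.
move=> mf mfj w0 hf hb mA Afin.
have mabs (h : T -> R) : measurable_fun setT h -> measurable_fun A (fun t => (`|h t|)%:E).
  by move=> mh; apply/measurable_EFinP; apply: measurable_funS (measurableT_comp _ mh).
have mwabs j : measurable_fun A (fun t => (w j * `|fj j t|)%:E).
  apply/measurable_EFinP; apply: measurable_funM => //.
  by apply: measurable_funS (measurableT_comp _ (mfj j)).
apply: le_trans (_ : _ <= \int[mu]_(t in A) (\sum_j (w j * `|fj j t|)%:E))%E _.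
  apply: ae_ge0_le_integral => //.
  - exact: mabs.
  - by move=> t _; rewrite sume_ge0 // => j _; rewrite lee_fin mulr_ge0.
  - exact: emeasurable_sum.
  - apply: filterS hf => t -> _; rewrite sumEFin lee_fin.
    apply: le_trans (ler_norm_sum _ _ _) _; apply: ler_sum => j _.
    by rewrite normrM ger0_norm.
rewrite ge0_integral_sum //; last by move=> j t _; rewrite lee_fin mulr_ge0.
rewrite -sumEFin; apply: lee_sum => j _.
under eq_integral do rewrite EFinM.
rewrite ge0_integralZl ?lee_fin // ?EFinM; last exact: mabs.
by apply: lee_wpmul2l; rewrite ?lee_fin // integral_abs_le_support.
Qed.

Lemma weak_norm_sparse_sum_le m (l : nat) (f : T -> R) (fj : 'I_m -> T -> R) (w : 'I_m -> R) :
  measurable_fun setT f -> (forall j, measurable_fun setT (fj j)) -> (forall j, 0 <= w j) ->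
  {ae mu, forall t, f t = \sum_j w j * fj j t} ->
  {ae mu, forall t, \sum_j ((fj j t != 0) : nat)%:R <= l%:R :> R} ->
  (forall j, weak_norm mu p (fj j) <= 1)%E ->
  (weak_norm mu p f <= (young_bound p w l%:R)%:E)%E.
Proof.
move=> mf mfj w0 hf hc hb.
apply/ereal_supP => _ [->|[A [mA /andP[Apos Afin]] <-]].
  by rewrite lee_fin young_bound_ge0.
have AUfin j : (mu (A `&` [set t | fj j t != 0%R]) < +oo)%E.
  by apply: le_lt_trans Afin; apply: le_measure; rewrite ?inE //; exact/measurableI/measurable_nonzero.
have sum_supp : \sum_j fine (mu (A `&` [set t | fj j t != 0])) <= l%:R * fine (mu A).
  rewrite -lee_fin -sumEFin EFinM fineK ?ge0_fin_numE ?measure_ge0 //.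
  under eq_bigr do rewrite fineK ?ge0_fin_numE ?measure_ge0 ?AUfin //.
  by apply: sum_measure_setI_le => // j; exact: measurable_nonzero.
apply: le_trans (lee_wpmul2l _ (integral_abs_sum_le mf mfj w0 hf hb mA Afin)) _.
  by rewrite lee_fin powR_ge0.
by rewrite -EFinM lee_fin young_sum // fine_gt0 // Apos Afin.
Qed.

End WeakLpBounds.

Lemma mul_eq0_of_max_eq_add (R : realDomainType) (a b : R) : Num.max a b = a + b -> a * b = 0.
Proof.
case: (leP a b) => _ H; apply/eqP; rewrite mulf_eq0.
  by rewrite -(addrK b a) -H subrr eqxx.
by rewrite -(addKr a b) -H addNr eqxx orbT.
Qed.

Lemma sum_nonzero_le_of_disjoint (R : realDomainType) n m (l : nat)
    (I : 'I_m -> {set 'I_n}) (e : 'I_n -> R) (c : 'I_m -> 'I_n -> R) :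
  (forall i, \sum_(j < m) (i \in I j) <= l)%N ->
  (forall i i', i != i' -> e i * e i' = 0) ->
  \sum_j ((\sum_(i in I j) c j i * e i != 0)%:R : R) <= l%:R.
Proof.
move=> hI he; have [i0 ei0|e0] := pickP (fun i => e i != 0); last first.
  rewrite big1 // => j _; rewrite big1 ?eqxx // => i _.
  by move/negbFE/eqP: (e0 i) => ->; rewrite mulr0.
have e_eq0 i : i != i0 -> e i = 0.
  by move=> /he /eqP; rewrite mulf_eq0 (negbTE ei0) orbF => /eqP.
apply: le_trans (_ : _ <= \sum_j ((i0 \in I j) : nat)%:R) _; last by rewrite -natr_sum ler_nat.
apply: ler_sum => j _; case: (boolP (i0 \in I j)) => hi0 /=; first by case: (_ != 0).
rewrite big1 ?eqxx // => i iI.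
by rewrite e_eq0 ?mulr0 //; apply: contraNneq hi0 => <-.
Qed.

Lemma sum_conj_powR_le (R : realType) (p C L : R) m (beta : 'I_m -> R) :
  1 < p -> 0 < C -> (forall j, 0 <= beta j) ->
  (forall w : 'I_m -> R, (forall j, 0 <= w j) ->
     \sum_j w j * beta j <= C * young_bound p w L) ->
  \sum_j beta j `^ (p / (p - 1)) <= C `^ (p / (p - 1)) * L.
Proof.
(* Young's inequality becomes an equality for the weights w_j = C^(1-q) beta_j^(q-1). *)
move=> hp C0 beta0 dual.
have p0 : 0 < p by rewrite (lt_trans ltr01).
have p1 : p - 1 != 0 by rewrite subr_eq0 gt_eqF.
set q := p / (p - 1).
have q0 : 0 < q by rewrite divr_gt0 // subr_gt0.
have qi : q^-1 = 1 - p^-1 by rewrite conj_exponent_inv.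
set s := C `^ (1 - q).
have s0 : 0 < s by rewrite powR_gt0.
set S := \sum_j beta j `^ q.
have := dual (fun j => s * beta j `^ (q - 1)) (fun j => mulr_ge0 (ltW s0) (powR_ge0 _ _)).
rewrite /young_bound -/q.
have -> : \sum_j s * beta j `^ (q - 1) * beta j = s * S.
  rewrite /S mulr_sumr; apply: eq_bigr => j _.
  by rewrite -mulrA [_ * beta j]mulrC mulr_powRB1.
have -> : \sum_j (s * beta j `^ (q - 1)) `^ p / p = s `^ p * S / p.
  rewrite /S mulr_sumr mulr_suml; apply: eq_bigr => j _.
  rewrite powRM ?(ltW s0) ?powR_ge0 // -powRrM.
  by rewrite (_ : (q - 1) * p = q) //; rewrite /q; field.
have Csp : C * s `^ p = s.
  rewrite /s -powRrM -[X in X * _]powRr1 ?(ltW C0) // -powRD ?(gt_eqF C0) ?implybT //.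
  by congr (_ `^ _); rewrite /q; field.
rewrite mulrDr !mulrA Csp => H.
have sS_le : s * S <= C * L.
  rewrite -(ler_pM2r (_ : 0 < q^-1)) ?invr_gt0 //.
  by move: H; rewrite -/q qi; set P := p^-1; set Z := s * S; lra.
have -> : C `^ q = C * s^-1.
  rewrite /s -powRN -[X in X * _]powRr1 ?(ltW C0) // -powRD ?(gt_eqF C0) ?implybT //.
  by congr (_ `^ _); ring.
by rewrite mulrAC ler_pdivlMr // mulrC.
Qed.

Section LatticeEmbedding.
Variables (R : realType) (p C : R) (X : set (nat -> R)) (nrm : (nat -> R) -> R).
Variables (Gamma : Type) (d : Gamma -> measure_display) (T : forall g, measurableType (d g)).
Variables (mu : forall g, {measure set T g -> \bar R}).
Unset Implicit Arguments.
Variable Tm : (nat -> R) -> forall g, T g -> R.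
Set Implicit Arguments.
Hypothesis hX : banach_lattice_with_basis X nrm.
Hypothesis hT : C_lattice_embedding X nrm mu p C Tm.

Lemma Tm_zero_ae g : {ae mu g, forall t, Tm (fun _ => 0) g t = 0}.
Proof.
case: hX => [[X0 _] _ _ _ _]; case: hT => _ Tlin _ _ _.
have := Tlin (-1) _ _ X0 X0 g.
have -> : seq_lin (-1) (fun _ : nat => 0) (fun _ => 0) = (fun _ => 0 : R).
  by apply/funext => k; rewrite /seq_lin mulr0 addr0.
by apply: filterS => t ->; rewrite mulN1r addNr.
Qed.

Lemma Tm_seq_comb_ae I (c : I -> R) v s g : (forall i, X (v i)) ->
  {ae mu g, forall t, Tm (seq_comb c v s) g t = \sum_(i <- s) c i * Tm (v i) g t}.
Proof.
move=> Xv; elim: s => [|i s IH] /=.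
  by apply: filterS (Tm_zero_ae g) => t ->; rewrite big_nil.
case: hT => _ Tlin _ _ _.
move: IH; have := Tlin (c i) _ _ (Xv i) (X_seq_comb hX c s Xv) g.
by apply: filterS2 => t -> ->; rewrite big_cons.
Qed.

Lemma Tm_unit_disjoint_ae g (i i' : nat) : i != i' ->
  {ae mu g, forall t, Tm (unit_seq R i) g t * Tm (unit_seq R i') g t = 0}.
Proof.
case: hX => _ _ _ _ [Xu _ _]; case: hT => _ Tlin Tmax _ _ ii'.
have max_eq_add : seq_max (unit_seq R i) (unit_seq R i') = seq_lin 1 (unit_seq R i) (unit_seq R i').
  apply/funext => k; rewrite /seq_max /seq_lin /unit_seq mul1r.
  case: eqP => [ki|_]; case: eqP => [ki'|_].
  - by move: ii'; rewrite -ki -ki' eqxx.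
  - by rewrite addr0 max_l ?ler01.
  - by rewrite add0r max_r ?ler01.
  - by rewrite addr0 maxxx.
move: (Tlin 1 _ _ (Xu i) (Xu i') g); have := Tmax _ _ (Xu i) (Xu i') g.
apply: filterS2 => t Tmax_t Tlin_t; apply: mul_eq0_of_max_eq_add.
by rewrite -Tmax_t max_eq_add Tlin_t mul1r.
Qed.

Lemma weak_norm_Tm_le x g : X x -> (weak_norm (mu g) p (Tm x g) <= (nrm x)%:E)%E.
Proof.
case: hT => _ _ _ _ Tnorm Xx; apply: le_trans (Tnorm _ Xx).2.
by apply: ereal_sup_ubound; right; exists g.
Qed.

Lemma nrm_le_of_weak_norm_Tm x K : 0 < C -> 0 <= K -> X x ->
  (forall g, weak_norm (mu g) p (Tm x g) <= K%:E)%E -> nrm x <= C * K.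
Proof.
case: hT => _ _ _ _ Tnorm C0 K0 Xx hK.
have : (linf_sum_norm mu p (Tm x) <= K%:E)%E.
  by apply/ereal_supP => _ [->|[g _ <-]]; rewrite ?lee_fin.
by move/(le_trans (Tnorm x Xx).1); rewrite lee_fin ler_pdivrMl.
Qed.

Lemma Tm_abs_restrict_sparse_ae n m (l : nat) (I : 'I_m -> {set 'I_n})
    (x : 'I_m -> nat -> R) g :
  (forall i, \sum_(j < m) (i \in I j) <= l)%N ->
  {ae mu g, forall t,
    \sum_j ((Tm (abs_restrict (I j) (x j)) g t != 0) : nat)%:R <= l%:R :> R}.
Proof.
case: (hX) => _ _ _ _ [Xu _ _] hI.
have Ty : {ae mu g, forall t j, Tm (abs_restrict (I j) (x j)) g t
                                = \sum_(i in I j) `|x j i| * Tm (unit_seq R i) g t}.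
  apply: filter_forall => j.
  apply: filterS (Tm_seq_comb_ae (fun i : 'I_n => `|x j i|) (enum (I j)) g (fun i => Xu i)).
  by move=> t ->; rewrite big_enum.
have disj : {ae mu g, forall t (ii : 'I_n * 'I_n), ii.1 != ii.2 ->
    Tm (unit_seq R ii.1) g t * Tm (unit_seq R ii.2) g t = 0}.
  apply: filter_forall => -[i i'] /=.
  have [<-|ne] := eqVneq i i'; first by apply: aeW => t /negP.
  by apply: filterS (Tm_unit_disjoint_ae g (_ : (i : nat) != i')) => // t H _.
apply: filterS2 Ty disj => t Ty_t disj_t; under eq_bigr do rewrite Ty_t.
exact: (sum_nonzero_le_of_disjoint (e := fun i => Tm (unit_seq R i) g t)
  (fun j i => `|x j i|) hI (fun i i' => disj_t (i, i'))).
Qed.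

Lemma nrm_sum_abs_restrict_le n m (l : nat) (I : 'I_m -> {set 'I_n})
    (x : 'I_m -> nat -> R) (w : 'I_m -> R) :
  1 < p -> 0 < C -> (forall i, \sum_(j < m) (i \in I j) <= l)%N ->
  (forall j, X (x j)) -> (forall j, nrm (x j) <= 1) -> (forall j, 0 <= w j) ->
  nrm (seq_comb w (fun j => abs_restrict (I j) (x j)) (index_enum 'I_m))
    <= C * young_bound p w l%:R.
Proof.
move=> hp C0 hI Xx nx w0.
case: (hX) => _ _ _ [_ Nmon] _; case: (hT) => Tin _ _ _ _.
pose y_ j := abs_restrict (I j) (x j).
have Xy_ j : X (y_ j) := X_abs_restrict hX (I j) (x j).
have Xy := X_seq_comb hX w (index_enum 'I_m) Xy_.
apply: nrm_le_of_weak_norm_Tm => // [|g]; first exact: young_bound_ge0.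
apply: (@weak_norm_sparse_sum_le _ _ _ _ _ hp _ _ _ (fun j => Tm (y_ j) g)) => //.
- exact: (Tin _ Xy).1.
- by move=> j; exact: (Tin _ (Xy_ j)).1.
- exact: Tm_seq_comb_ae.
- exact: Tm_abs_restrict_sparse_ae.
- move=> j; apply: le_trans (weak_norm_Tm_le g (Xy_ j)) _; rewrite lee_fin.
  by apply: le_trans (nx j); apply: Nmon => // k; exact: normr_abs_restrict_le.
Qed.

Lemma weighted_sum_dual_norm_le n (b : 'I_n -> R) m (l : nat) (I : 'I_m -> {set 'I_n})
    (w : 'I_m -> R) :
  1 < p -> 0 < C ->
  (forall x, X x -> (forall i, 0 <= x i) -> 0 <= \sum_(i < n) b i * x i) ->
  dual_norm X nrm (fun x => \sum_(i < n) b i * x i) <= 1 ->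
  (forall i, \sum_(j < m) (i \in I j) <= l)%N -> (forall j, 0 <= w j) ->
  \sum_j w j * dual_norm X nrm (fun x => \sum_(i < n | i \in I j) b i * x i)
    <= C * young_bound p w l%:R.
Proof.
move=> hp C0 bpos bnorm hI w0.
have b0 i : 0 <= b i by exact: (@coef_ge0_of_positive _ _ _ hX _ xpredT b bpos i).
set W := \sum_j w j; have W0 : 0 <= W by exact: sumr_ge0.
apply/ler_addgt0Pr => e e0; pose e' := e / (W + 1).
have e'0 : 0 < e' by rewrite divr_gt0 // ltr_wpDl.
have /choice [x hx] : forall j, exists x, [/\ X x, nrm x <= 1 &
    dual_norm X nrm (fun x => \sum_(i < n | i \in I j) b i * x i) - e'
      < `|\sum_(i < n | i \in I j) b i * x i|].
  by move=> j; exact: (dual_norm_approx hX (fun i => i \in I j) b e'0).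
pose y := seq_comb w (fun j => abs_restrict (I j) (x j)) (index_enum 'I_m).
have Xy : X y := X_seq_comb hX w _ (fun j => X_abs_restrict hX (I j) (x j)).
have approx j : dual_norm X nrm (fun x => \sum_(i < n | i \in I j) b i * x i)
    <= \sum_(i in I j) b i * `|x j i| + e'.
  case: (hx j) => _ _ /ltW; rewrite -lerBlDr => /le_trans; apply.
  apply: le_trans (ler_norm_sum _ _ _) _; apply: ler_sum => i _.
  by rewrite normrM ger0_norm.
have by_eq : \sum_(i < n) b i * y i = \sum_j w j * \sum_(i in I j) b i * `|x j i|.
  rewrite /y; under eq_bigr do rewrite seq_combE mulr_sumr.
  rewrite exchange_big /=; apply: eq_bigr => j _.
  by rewrite -sum_mul_abs_restrict mulr_sumr; apply: eq_bigr => i _; rewrite mulrCA.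
have by_le : \sum_(i < n) b i * y i <= nrm y.
  apply: le_trans (ler_norm _) _; apply: le_trans (normr_le_dual_norm hX xpredT b Xy) _.
  by case: hX => _ [Nge0 _ _ _] _ _ _; rewrite ler_piMl ?Nge0.
apply: le_trans (_ : _ <= \sum_j w j * (\sum_(i in I j) b i * `|x j i| + e')) _.
  by apply: ler_sum => j _; apply: ler_wpM2l.
under eq_bigr do rewrite mulrDr.
rewrite big_split /= -by_eq -mulr_suml -/W; apply: lerD.
  have [Xx nx] : (forall j, X (x j)) /\ (forall j, nrm (x j) <= 1).
    by split => j; case: (hx j).
  exact: le_trans by_le (nrm_sum_abs_restrict_le hp C0 hI Xx nx w0).
rewrite /e' mulrCA ger_pMr // ler_pdivrMr ?mul1r ?lerDl //.
by rewrite ltr_wpDl.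
Qed.

End LatticeEmbedding.

Unset Implicit Arguments.

Theorem corollary4p2 (R : realType) (p C : R) (hp : 1 < p) (hC : 1 <= C)
  (X : set (nat -> R)) (nrm : (nat -> R) -> R)
  (hX : banach_lattice_with_basis X nrm)
  (Gamma : Type) (d : Gamma -> measure_display)
  (T : forall g, measurableType (d g)) (mu : forall g, {measure set T g -> \bar R})
  (Tm : (nat -> R) -> forall g, T g -> R)
  (hT : C_lattice_embedding X nrm mu p C Tm)
  (n : nat) (b : 'I_n -> R)
  (bpos : forall x, X x -> (forall i, 0 <= x i) -> 0 <= \sum_(i < n) b i * x i)
  (bnorm : dual_norm X nrm (fun x => \sum_(i < n) b i * x i) = 1)
  (m l : nat) (I : 'I_m -> {set 'I_n})
  (hI : forall i : 'I_n, (\sum_(j < m) ((i \in I j) : nat))%N = l) :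
  let p' := p / (p - 1) in
  \sum_(j < m) (dual_norm X nrm (fun x => \sum_(i < n | i \in I j) b i * x i)) `^ p'
    <= C `^ p' * l%:R.
Proof.
have C0 : 0 < C by exact: lt_le_trans ltr01 hC.
apply: sum_conj_powR_le => // [j|w w0]; first exact: dual_norm_ge0.
apply: (weighted_sum_dual_norm_le hX hT) => // [|i]; first by rewrite bnorm.
by rewrite hI.
Qed.
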